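(* Let $\{(X_n,M_n,\cdot)\}_{n\in\mathbb N}$ be a sequence of nonempty compact non-Archimedean fuzzy metric spaces with the product $t$-norm $\cdot$, satisfying: (1) there exists a nondecreasing left-continuous function $C:(0,\infty)\to(0,1]$ with $0<C(s)\le\mathrm{diam}_s(X_n)$ for all $s>0$ and all $n$; (2) for every $t>0$ and $0<\varepsilon<1$ there is $N(\varepsilon,t)\in\mathbb N$ with $\mathrm{Cov}(X_n,\varepsilon,t)\le N(\varepsilon,t)$ for all $n$; (3) for every $t>0$ and $0<\varepsilon<1$, with $N=N(\varepsilon,t)$, there exist, for each $n$, a $(t,\varepsilon)$-net $\{x_i^n\}_{i=1}^N$ in $X_n$ such that for all $n,m$, all $s>t$ and all $i,j\in\{1,\dots,N\}$: if $M_n(x_i^n,x_j^n,s)<M_m(x_i^m,x_j^m,s)$ then $\dfrac{M_n(x_i^n,x_j^n,s)}{M_m(x_i^m,x_j^m,s)}\ge\dfrac{M_n(x_i^n,x_j^n,t)}{M_m(x_i^m,x_j^m,t)}$. Then for every $t>0$ and $0<\varepsilon<1$ there is a subsequence $\{X_{n_k}\}_k$ with $M_{GH}(X_{n_j},X_{n_k},t)>(1-\varepsilon)^2$ for all $j,k$; and consequently $\{(X_n,M_n,\cdot)\}_n$ has a Cauchy subsequence with respect to $M_{GH}$.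
   Context: A fuzzy metric space $(X,M,\cdot)$ with the product $t$-norm: $M:X\times X\times[0,\infty)\to[0,1]$ with, for all $x,y,z$ and $t,s>0$: (KM1) $M(x,y,0)=0$; (KM2) $M(x,y,t)=1$ for all $t>0$ iff $x=y$; (KM3) $M(x,y,t)=M(y,x,t)$; (KM4) $M(x,y,t)\cdot M(y,z,s)\le M(x,z,t+s)$; (KM5) $M(x,y,\cdot)$ left continuous on $[0,\infty)$. Non-Archimedean: $M(x,z,\max\{t,s\})\ge M(x,y,t)\cdot M(y,z,s)$. Balls $B(x,\varepsilon,t)=\{y: M(x,y,t)>1-\varepsilon\}$ generate the topology; ''compact'' refers to it. $H_M(A,B,t)=\min\{\inf_{a\in A}\sup_{b\in B}M(a,b,t),\ \inf_{b\in B}\sup_{a\in A}M(a,b,t)\}$ for nonempty compact $A,B$. A fuzzy metric on the disjoint union $X\sqcup Y$ is admissible if it restricts to the given ones on $X$ and $Y$; $M_{GH}(X,Y,t)=\sup\{H_M(X,Y,t): M$ admissible non-Archimedean fuzzy metric on $X\sqcup Y$ with the same $t$-norm$\}$. A sequence $(X_n)$ is Cauchy w.r.t. $M_{GH}$ if for every $t>0$, $0<\varepsilon<1$ there is $n_0$ with $M_{GH}(X_n,X_m,t)>1-\varepsilon$ for all $n,m\ge n_0$. A family $\{x_i\}_{i=1}^N$ is a $(t,\varepsilon)$-net in $X$ if each $x\in X$ has some $i$ with $M(x,x_i,t)>1-\varepsilon$. $\mathrm{Cov}(X,\varepsilon,t)$ is the minimal cardinality of $C\subseteq X$ with $X=\bigcup_{c\in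 C}B(c,\varepsilon,t)$. $\mathrm{diam}_s(X)=\inf\{M(x,y,s):x,y\in X\}$. *)

From Stdlib Require Import Reals Lra List.
From Coquelicot Require Import Coquelicot.
Open Scope R_scope.

(* A fuzzy metric space (X, M, .) with the product t-norm (KM1)-(KM5).
   M is only meaningful on t in [0, oo); nothing is required for t < 0. *)
Definition is_fuzzy_metric_prod (X : Type) (M : X -> X -> R -> R) : Prop :=
  (forall x y t, 0 <= t -> 0 <= M x y t <= 1) /\
  (forall x y, M x y 0 = 0) /\
  (forall x y, (forall t, 0 < t -> M x y t = 1) <-> x = y) /\
  (forall x y t, 0 <= t -> M x y t = M y x t) /\
  (forall x y z t s, 0 < t -> 0 < s -> M x y t * M y z s <= M x z (t + s)) /\
  (forall x y t, 0 < t -> forall e, 0 < e -> exists d, 0 < d /\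
     forall s, 0 <= s -> t - d < s -> s <= t -> Rabs (M x y s - M x y t) < e).

Definition is_nA_fuzzy_metric_prod (X : Type) (M : X -> X -> R -> R) : Prop :=
  is_fuzzy_metric_prod X M /\
  (forall x y z t s, 0 < t -> 0 < s -> M x y t * M y z s <= M x z (Rmax t s)).

Definition ball_f {X : Type} (M : X -> X -> R -> R) (x : X) (eps t : R) (y : X) : Prop :=
  M x y t > 1 - eps.

Definition f_open {X : Type} (M : X -> X -> R -> R) (U : X -> Prop) : Prop :=
  forall x, U x -> exists eps t, 0 < eps < 1 /\ 0 < t /\
    forall y, ball_f M x eps t y -> U y.

Definition f_compact_space (X : Type) (M : X -> X -> R -> R) : Prop :=
  forall (I : Type) (U : I -> X -> Prop),
    (forall i, f_open M (U i)) -> (forall x, exists i, U i x) ->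
    exists l : list I, forall x, exists i, In i l /\ U i x.

Definition sup_img {A : Type} (f : A -> R) : Rbar := Lub_Rbar (fun v => exists a, v = f a).
Definition inf_img {A : Type} (f : A -> R) : Rbar := Glb_Rbar (fun v => exists a, v = f a).

Definition diam_s {X : Type} (M : X -> X -> R -> R) (s : R) : Rbar :=
  inf_img (fun p : X * X => M (fst p) (snd p) s).

Definition is_ball_cover {X : Type} (M : X -> X -> R -> R) (eps t : R) (l : list X) : Prop :=
  forall x, exists c, In c l /\ ball_f M c eps t x.

(* Cov(X, eps, t) = k : k is the minimal cardinality of a subset C of X
   whose balls B(c,eps,t) cover X (finite subsets represented by duplicate-free lists) *)
Definition Cov_is {X : Type} (M : X -> X -> R -> R) (eps t : R) (k : nat) : Prop :=
  (exists l, NoDup l /\ length l = k /\ is_ball_cover M eps t l) /\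
  (forall l, NoDup l -> is_ball_cover M eps t l -> (k <= length l)%nat).

(* {x_i}_{i=1}^N (indexed here by i = 0..N-1) is a (t,eps)-net *)
Definition is_net {X : Type} (M : X -> X -> R -> R) (t eps : R) (N : nat) (x : nat -> X) : Prop :=
  forall y, exists i, (i < N)%nat /\ M y (x i) t > 1 - eps.

(* H_M(X, Y, t) for X, Y embedded in the disjoint union X + Y.
   The inner sups are finite (values in [0,1], spaces nonempty); [real] converts them. *)
Definition H_M {X Y : Type} (Mu : X + Y -> X + Y -> R -> R) (t : R) : Rbar :=
  Rbar_min
    (inf_img (fun a : X => real (sup_img (fun b : Y => Mu (inl a) (inr b) t))))
    (inf_img (fun b : Y => real (sup_img (fun a : X => Mu (inl a) (inr b) t)))).

Definition admissible {X Y : Type} (MX : X -> X -> R -> R) (MY : Y -> Y -> R -> R)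
  (Mu : X + Y -> X + Y -> R -> R) : Prop :=
  is_nA_fuzzy_metric_prod (X + Y) Mu /\
  (forall a b t, 0 <= t -> Mu (inl a) (inl b) t = MX a b t) /\
  (forall a b t, 0 <= t -> Mu (inr a) (inr b) t = MY a b t).

Definition M_GH {X Y : Type} (MX : X -> X -> R -> R) (MY : Y -> Y -> R -> R) (t : R) : Rbar :=
  Lub_Rbar (fun v => exists Mu : X + Y -> X + Y -> R -> R,
    admissible MX MY Mu /\ Finite v = H_M Mu t).

Definition GH_Cauchy (X : nat -> Type) (M : forall n, X n -> X n -> R -> R) : Prop :=
  forall t eps, 0 < t -> 0 < eps < 1 ->
    exists n0, forall n m, (n0 <= n)%nat -> (n0 <= m)%nat ->
      Rbar_lt (Finite (1 - eps)) (M_GH (M n) (M m) t).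

Definition strictly_increasing (phi : nat -> nat) : Prop :=
  forall k, (phi k < phi (S k))%nat.

(* Fix [t], [eps] and the nets of (3), and put [c = 1 - eps/2].  Pigeonholing the
   finitely many net distances [M_n (x_i, x_j, t)] yields a subsequence along which any
   two nets satisfy [c^2 M_m < M_n] at time [t].  Two such spaces are glued along their
   nets by [M (a, b, s) = max_i M_n (a, x_i, s) * r s * M_m (y_i, b, s)], where the scale
   [r] is [c] above some [u0 < t] and [c * C s] below it: the diameter bound [C] handles
   small [s], left continuity handles [s] just below [t], and the ratio condition of (3)
   handles [s > t], so that [r^2 M_m <= M_n] on the nets and the gluing is an admissible
   non-Archimedean fuzzy metric.  As the nets are [(t, eps)]-nets, its Hausdorff value at
   [t] is at least [(1 - eps) c > (1 - eps)^2].  A diagonal argument over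
   [t = eps = 1/(K+2)] gives the Cauchy subsequence. *)

From Stdlib Require Import Reals Lra Lia List ZArith Classical ClassicalEpsilon.
From Coquelicot Require Import Coquelicot.
Open Scope R_scope.

Lemma strictly_increasing_lt (f : nat -> nat) :
  strictly_increasing f -> forall a b, (a < b)%nat -> (f a < f b)%nat.
Proof.
  intros Hf a b Hab. induction Hab.
  - apply Hf.
  - pose proof (Hf m). lia.
Qed.

Lemma strictly_increasing_ge (f : nat -> nat) :
  strictly_increasing f -> forall k, (k <= f k)%nat.
Proof. intros Hf k. induction k; [lia|]. pose proof (Hf k). lia. Qed.

Lemma strictly_increasing_comp (f g : nat -> nat) :
  strictly_increasing f -> strictly_increasing g -> strictly_increasing (fun k => f (g k)).
Proof. intros Hf Hg k. apply strictly_increasing_lt; auto. Qed.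

Lemma strictly_increasing_id : strictly_increasing (fun k => k).
Proof. intros k; lia. Qed.

Definition infinitely_often (P : nat -> Prop) : Prop :=
  forall m, exists n, (m <= n)%nat /\ P n.

Lemma infinitely_often_subsequence (P : nat -> Prop) :
  infinitely_often P -> exists th, strictly_increasing th /\ forall k, P (th k).
Proof.
  intros H.
  destruct (choice (fun m n => (m <= n)%nat /\ P n) H) as [g Hg].
  exists (fix th k := match k with O => g O | S k' => g (S (th k')) end).
  split.
  - intros k. simpl.
    match goal with |- (?a < g (S ?a))%nat => destruct (Hg (S a)); lia end.
  - intros [|k]; apply Hg.
Qed.

Lemma bounded_nat_seq_frequent_value (f : nat -> nat) (B : nat) :
  forall m0, (forall n, (m0 <= n)%nat -> (f n <= B)%nat) ->
  exists v, infinitely_often (fun n => f n = v).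
Proof.
  induction B as [|B IH]; intros m0 H.
  - exists 0%nat. intros m. exists (Nat.max m m0). split; [lia|].
    specialize (H (Nat.max m m0) ltac:(lia)). lia.
  - destruct (classic (infinitely_often (fun n => f n = S B))) as [Hv|Hv]; [eauto|].
    apply not_all_ex_not in Hv as [m1 Hm1].
    apply (IH (Nat.max m0 m1)). intros n Hn.
    assert (f n <> S B) by (intro E; apply Hm1; exists n; split; [lia|auto]).
    specialize (H n ltac:(lia)). lia.
Qed.

Lemma bounded_nat_seq_const_subsequence (f : nat -> nat) (B : nat) :
  (forall n, (f n <= B)%nat) ->
  exists th, strictly_increasing th /\ forall j k, f (th j) = f (th k).
Proof.
  intros H. destruct (bounded_nat_seq_frequent_value f B 0) as [v Hv]; [auto|].
  destruct (infinitely_often_subsequence _ Hv) as [th [Hth Hp]].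
  exists th. split; auto. intros j k. rewrite !Hp. reflexivity.
Qed.

(* Pigeonhole on the buckets [ceil (f n / h)]. *)
Lemma unit_seq_close_subsequence (f : nat -> R) (h : R) :
  0 < h -> (forall n, 0 <= f n <= 1) ->
  exists th, strictly_increasing th /\ forall j k, Rabs (f (th j) - f (th k)) < h.
Proof.
  intros Hh Hf.
  set (bucket := fun v => Z.to_nat (up (v / h))).
  assert (Hpos : forall v, 0 <= v -> (0 < up (v / h))%Z).
  { intros v Hv. apply lt_IZR. destruct (archimed (v / h)).
    assert (0 <= v / h) by (apply Rdiv_le_0_compat; lra). lra. }
  destruct (bounded_nat_seq_const_subsequence (fun n => bucket (f n)) (bucket 1))
    as [th [Hth Hc]].
  { intros n. unfold bucket. destruct (Hf n) as [H0 H1].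
    destruct (archimed (f n / h)), (archimed (1 / h)).
    assert (f n / h <= 1 / h) by (apply Rmult_le_compat_r; [apply Rlt_le, Rinv_0_lt_compat|]; lra).
    assert (up (f n / h) < up (1 / h) + 1)%Z by (apply lt_IZR; rewrite plus_IZR; simpl; lra).
    specialize (Hpos _ H0). apply Z2Nat.inj_le; lia. }
  exists th. split; [exact Hth|]. intros j k.
  specialize (Hc j k). unfold bucket in Hc.
  pose proof (Hpos _ (proj1 (Hf (th j)))). pose proof (Hpos _ (proj1 (Hf (th k)))).
  apply Z2Nat.inj in Hc; try lia.
  destruct (archimed (f (th j) / h)), (archimed (f (th k) / h)). rewrite Hc in *.
  replace (f (th j) - f (th k)) with (h * (f (th j) / h - f (th k) / h)) by (field; lra).
  rewrite Rabs_mult, Rabs_pos_eq by lra.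
  assert (Rabs (f (th j) / h - f (th k) / h) < 1) by (apply Rabs_def1; lra).
  nra.
Qed.

Lemma unit_seqs_close_subsequence (A : Type) (f : A -> nat -> R) (h : R) :
  0 < h -> (forall p n, 0 <= f p n <= 1) -> forall L : list A,
  exists th, strictly_increasing th /\
    forall p, In p L -> forall j k, Rabs (f p (th j) - f p (th k)) < h.
Proof.
  intros Hh Hf L. induction L as [|p L [th1 [Hth1 H1]]].
  - exists (fun k => k). split; [apply strictly_increasing_id | intros p []].
  - destruct (unit_seq_close_subsequence (fun k => f p (th1 k)) h Hh) as [th2 [Hth2 H2]];
      [auto|].
    exists (fun k => th1 (th2 k)). split; [apply strictly_increasing_comp; auto|].
    intros q [<-|Hq] j k; auto.
Qed.

Fixpoint diagonal_stage (sel : nat -> (nat -> nat) -> nat -> nat) (K : nat) : nat -> nat :=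
  match K with
  | O => fun n => n
  | S K' => fun n => diagonal_stage sel K' (sel K' (diagonal_stage sel K') n)
  end.

Lemma diagonal_stage_refines sel K d n :
  exists m, diagonal_stage sel (K + d) n = diagonal_stage sel K m.
Proof.
  revert n. induction d as [|d IH]; intros n.
  - exists n. rewrite Nat.add_0_r. reflexivity.
  - rewrite Nat.add_succ_r. apply IH.
Qed.

Lemma diagonal_subsequence (Q : nat -> nat -> nat -> Prop) :
  (forall K psi, strictly_increasing psi ->
     exists th, strictly_increasing th /\ forall j k, Q K (psi (th j)) (psi (th k))) ->
  exists phi, strictly_increasing phi /\
    forall K n m, (K < n)%nat -> (K < m)%nat -> Q K (phi n) (phi m).
Proof.
  intros H.
  assert (Hsel : forall K psi, exists th, strictly_increasing psi ->
    strictly_increasing th /\ forall j k, Q K (psi (th j)) (psi (th k))).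
  { intros K psi. destruct (classic (strictly_increasing psi)) as [Hp|Hp].
    - destruct (H K psi Hp) as [th Hth]. eauto.
    - exists (fun k => k). tauto. }
  destruct (choice (fun K => _) (fun K => choice _ (Hsel K))) as [sel Hs].
  set (stage := diagonal_stage sel).
  assert (Hstage : forall K, strictly_increasing (stage K)).
  { induction K; [apply strictly_increasing_id|].
    change (strictly_increasing (fun n => stage K (sel K (stage K) n))).
    apply strictly_increasing_comp; [auto | apply (Hs K (stage K) IHK)]. }
  exists (fun k => stage k k). split.
  - intros k. change (stage k k < stage k (sel k (stage k) (S k)))%nat.
    pose proof (strictly_increasing_ge _ (proj1 (Hs k (stage k) (Hstage k))) (S k)).
    apply strictly_increasing_lt; [apply Hstage | lia].
  - intros K n m Hn Hm.
    destruct (diagonal_stage_refines sel (S K) (n - S K) n) as [n' En].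
    destruct (diagonal_stage_refines sel (S K) (m - S K) m) as [m' Em].
    replace (S K + (n - S K))%nat with n in En by lia.
    replace (S K + (m - S K))%nat with m in Em by lia.
    fold stage in En, Em. rewrite En, Em.
    apply (Hs K (stage K) (Hstage K)).
Qed.

Lemma sup_img_ge_real {A : Type} (f : A -> R) (B : R) :
  (forall a, f a <= B) -> forall a, f a <= real (sup_img f).
Proof.
  intros HB a. unfold sup_img.
  destruct (Lub_Rbar_correct (fun v => exists a, v = f a)) as [Hub Hlub].
  assert (Rbar_le (Lub_Rbar (fun v => exists a, v = f a)) B)
    by (apply Hlub; intros v [a' ->]; apply HB).
  specialize (Hub (f a) (ex_intro _ a eq_refl)).
  destruct (Lub_Rbar _); simpl in *; tauto.
Qed.

Lemma inf_img_finite_ge {A : Type} (f : A -> R) (L : R) :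
  inhabited A -> (forall a, L <= f a) -> exists l, inf_img f = Finite l /\ L <= l.
Proof.
  intros [a0] HL. unfold inf_img.
  destruct (Glb_Rbar_correct (fun v => exists a, v = f a)) as [Hlb Hglb].
  assert (Rbar_le L (Glb_Rbar (fun v => exists a, v = f a)))
    by (apply Hglb; intros v [a ->]; apply HL).
  specialize (Hlb (f a0) (ex_intro _ a0 eq_refl)).
  destruct (Glb_Rbar _) as [l| |]; simpl in *; try contradiction. eauto.
Qed.

Lemma inf_img_le {A : Type} (f : A -> R) a : Rbar_le (inf_img f) (f a).
Proof. apply (Glb_Rbar_correct (fun v => exists a, v = f a)). eauto. Qed.

Fixpoint Rmax_upto (g : nat -> R) (N : nat) : R :=
  match N with O => 0 | S k => Rmax (Rmax_upto g k) (g k) end.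

Lemma Rmax_upto_ge (g : nat -> R) N i : (i < N)%nat -> g i <= Rmax_upto g N.
Proof.
  induction N as [|N IH]; intros Hi; [lia|]. simpl.
  destruct (Nat.eq_dec i N) as [->|Hne].
  - apply Rmax_r.
  - eapply Rle_trans; [apply IH; lia | apply Rmax_l].
Qed.

Lemma Rmax_upto_attained (g : nat -> R) N :
  Rmax_upto g N = 0 \/ exists i, (i < N)%nat /\ Rmax_upto g N = g i.
Proof.
  induction N as [|N [IH|[i [Hi IH]]]]; simpl; [auto| |];
    unfold Rmax; destruct Rle_dec; eauto;
    right; exists i; split; [lia | assumption].
Qed.

Lemma Rmax_upto_nonneg (g : nat -> R) N : 0 <= Rmax_upto g N.
Proof. induction N; simpl; [lra|]. eapply Rle_trans; [eassumption | apply Rmax_l]. Qed.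

Lemma Rmax_upto_le (g : nat -> R) N B :
  0 <= B -> (forall i, (i < N)%nat -> g i <= B) -> Rmax_upto g N <= B.
Proof.
  intros HB H. destruct (Rmax_upto_attained g N) as [E|[i [Hi E]]]; rewrite E; auto.
Qed.

Definition left_cont (f : R -> R) (t : R) : Prop :=
  forall e, 0 < e -> exists d, 0 < d /\
    forall s, 0 <= s -> t - d < s -> s <= t -> Rabs (f s - f t) < e.

Lemma left_cont_const (c t : R) : left_cont (fun _ => c) t.
Proof. intros e He. exists 1. split; [lra|]. intros. rewrite Rminus_diag, Rabs_R0. auto. Qed.

Lemma left_cont_ext (f g : R -> R) (t : R) :
  0 < t -> (forall s, 0 < s -> g s = f s) -> left_cont f t -> left_cont g t.
Proof.
  intros Ht E Hf e He. destruct (Hf e He) as [d [Hd H]].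
  exists (Rmin d t). split; [apply Rmin_pos; auto|]. intros s Hs Hl Hr.
  pose proof (Rmin_l d t); pose proof (Rmin_r d t).
  rewrite !E by lra. apply H; lra.
Qed.

Lemma Rabs_Rmax_sub a b a' b' :
  Rabs (Rmax a b - Rmax a' b') <= Rmax (Rabs (a - a')) (Rabs (b - b')).
Proof.
  pose proof (Rmax_l (Rabs (a - a')) (Rabs (b - b'))) as H1.
  pose proof (Rmax_r (Rabs (a - a')) (Rabs (b - b'))) as H2.
  apply Rabs_le_between in H1, H2. apply Rabs_le_between.
  pose proof (Rmax_l a b); pose proof (Rmax_r a b).
  pose proof (Rmax_l a' b'); pose proof (Rmax_r a' b').
  assert (Rmax a b = a \/ Rmax a b = b) as [E|E] by (unfold Rmax; destruct Rle_dec; auto);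
  assert (Rmax a' b' = a' \/ Rmax a' b' = b') as [E'|E'] by (unfold Rmax; destruct Rle_dec; auto);
  lra.
Qed.

Lemma left_cont_max (f g : R -> R) (t : R) :
  left_cont f t -> left_cont g t -> left_cont (fun s => Rmax (f s) (g s)) t.
Proof.
  intros Hf Hg e He.
  destruct (Hf e He) as [d1 [Hd1 H1]], (Hg e He) as [d2 [Hd2 H2]].
  exists (Rmin d1 d2). split; [apply Rmin_pos; auto|]. intros s Hs Hl Hr.
  pose proof (Rmin_l d1 d2); pose proof (Rmin_r d1 d2).
  eapply Rle_lt_trans; [apply Rabs_Rmax_sub|].
  apply Rmax_lub_lt; [apply H1 | apply H2]; auto; lra.
Qed.

Lemma left_cont_Rmax_upto (g : nat -> R -> R) (N : nat) (t : R) :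
  (forall i, (i < N)%nat -> left_cont (g i) t) ->
  left_cont (fun s => Rmax_upto (fun i => g i s) N) t.
Proof.
  induction N as [|N IH]; intros H; simpl.
  - apply left_cont_const.
  - apply left_cont_max; [apply IH; intros; apply H | apply H]; lia.
Qed.

Lemma left_cont_mult (f g : R -> R) (t : R) :
  0 < t -> (forall s, 0 < s -> Rabs (f s) <= 1) -> (forall s, 0 < s -> Rabs (g s) <= 1) ->
  left_cont f t -> left_cont g t -> left_cont (fun s => f s * g s) t.
Proof.
  intros Ht Bf Bg Hf Hg e He.
  destruct (Hf (e / 2)) as [d1 [Hd1 H1]]; [lra|].
  destruct (Hg (e / 2)) as [d2 [Hd2 H2]]; [lra|].
  exists (Rmin (Rmin d1 d2) t). split; [repeat apply Rmin_pos; auto|].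
  intros s Hs Hl Hr.
  pose proof (Rmin_l d1 d2); pose proof (Rmin_r d1 d2).
  pose proof (Rmin_l (Rmin d1 d2) t); pose proof (Rmin_r (Rmin d1 d2) t).
  assert (A1 : Rabs (f s - f t) < e / 2) by (apply H1; lra).
  assert (A2 : Rabs (g s - g t) < e / 2) by (apply H2; lra).
  replace (f s * g s - f t * g t) with ((f s - f t) * g s + f t * (g s - g t)) by ring.
  eapply Rle_lt_trans; [apply Rabs_triang|]. rewrite !Rabs_mult.
  pose proof (Bg s ltac:(lra)); pose proof (Bf t Ht).
  pose proof (Rabs_pos (f s - f t)); pose proof (Rabs_pos (g s - g t)).
  pose proof (Rabs_pos (g s)); pose proof (Rabs_pos (f t)).
  assert (Rabs (f s - f t) * Rabs (g s) <= Rabs (f s - f t)) by nra.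
  assert (Rabs (f t) * Rabs (g s - g t) <= Rabs (g s - g t)) by nra.
  lra.
Qed.

Lemma Rabs_le_1 x : 0 <= x <= 1 -> Rabs x <= 1.
Proof. intros. rewrite Rabs_pos_eq; lra. Qed.

Section NonArchimedean.

Variables (X : Type) (M : X -> X -> R -> R).
Hypothesis HM : is_nA_fuzzy_metric_prod X M.

Lemma nAfm_range x y t : 0 <= t -> 0 <= M x y t <= 1.
Proof. destruct HM as [[? [? [? [? [? ?]]]]] ?]; auto. Qed.

Lemma nAfm_zero x y : M x y 0 = 0.
Proof. destruct HM as [[? [? [? [? [? ?]]]]] ?]; auto. Qed.

Lemma nAfm_eq x y : (forall t, 0 < t -> M x y t = 1) <-> x = y.
Proof. destruct HM as [[? [? [? [? [? ?]]]]] ?]; auto. Qed.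

Lemma nAfm_self x t : 0 < t -> M x x t = 1.
Proof. intros Ht. apply nAfm_eq; auto. Qed.

Lemma nAfm_sym x y t : 0 <= t -> M x y t = M y x t.
Proof. destruct HM as [[? [? [? [? [? ?]]]]] ?]; auto. Qed.

Lemma nAfm_left_cont x y t : 0 < t -> left_cont (M x y) t.
Proof. unfold left_cont; destruct HM as [[? [? [? [? [? ?]]]]] ?]; auto. Qed.

Lemma nAfm_mono x y t t' : 0 < t -> t <= t' -> M x y t <= M x y t'.
Proof.
  intros Ht Htt. pose proof (proj2 HM x y y t t' Ht ltac:(lra)) as H.
  rewrite nAfm_self, Rmult_1_r, Rmax_right in H by lra. exact H.
Qed.

Lemma nAfm_ultra x y z t s u :
  0 < t -> 0 < s -> t <= u -> s <= u -> M x y t * M y z s <= M x z u.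
Proof.
  intros Ht Hs Htu Hsu. eapply Rle_trans; [apply HM; auto|].
  apply nAfm_mono; [apply (Rlt_le_trans _ t); [|apply Rmax_l] | apply Rmax_lub]; auto.
Qed.

End NonArchimedean.

(* For a non-Archimedean function with [M x x = 1], (KM4) is a consequence. *)
Lemma is_nA_fuzzy_metric_prod_intro (Z : Type) (M : Z -> Z -> R -> R) :
  (forall x y t, 0 <= t -> 0 <= M x y t <= 1) ->
  (forall x y, M x y 0 = 0) ->
  (forall x y, (forall t, 0 < t -> M x y t = 1) <-> x = y) ->
  (forall x y t, 0 <= t -> M x y t = M y x t) ->
  (forall x y t, 0 < t -> left_cont (M x y) t) ->
  (forall x y z t s, 0 < t -> 0 < s -> M x y t * M y z s <= M x z (Rmax t s)) ->
  is_nA_fuzzy_metric_prod Z M.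
Proof.
  intros H1 H2 H3 H4 H5 H6.
  refine (conj (conj H1 (conj H2 (conj H3 (conj H4 (conj _ H5))))) H6).
  intros x y z t s Ht Hs.
  eapply Rle_trans; [apply H6; auto|].
  assert (Hu : 0 < Rmax t s) by (apply (Rlt_le_trans _ t); [|apply Rmax_l]; auto).
  pose proof (H6 x z z (Rmax t s) (t + s) Hu ltac:(lra)) as H.
  rewrite (proj2 (H3 z z) eq_refl (t + s)), Rmult_1_r,
    (Rmax_right (Rmax t s)) in H by (try apply Rmax_lub; lra).
  exact H.
Qed.

Lemma Rmult3_le_compat a b c a' b' c' :
  0 <= a -> 0 <= b -> 0 <= c -> a <= a' -> b <= b' -> c <= c' -> a * b * c <= a' * b' * c'.
Proof.
  intros. apply Rmult_le_compat; try apply Rmult_le_compat; auto using Rmult_le_pos; lra.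
Qed.

Lemma M_GH_ge_H_M {X Y : Type} (MX : X -> X -> R -> R) (MY : Y -> Y -> R -> R)
  (Mu : X + Y -> X + Y -> R -> R) (t h : R) :
  admissible MX MY Mu -> H_M Mu t = Finite h -> Rbar_le h (M_GH MX MY t).
Proof.
  intros Had E. apply (Lub_Rbar_correct (fun v => exists Mu, admissible MX MY Mu /\
    Finite v = H_M Mu t)). eauto.
Qed.

Section Glue.

Context {X Y : Type}.
Variables (Mx : X -> X -> R -> R) (My : Y -> Y -> R -> R).
Variables (N : nat) (xs : nat -> X) (ys : nat -> Y) (r : R -> R).

Definition glue_term (a : X) (b : Y) (s : R) (i : nat) : R :=
  Mx a (xs i) s * r s * My (ys i) b s.

Definition glue_cross (a : X) (b : Y) (s : R) : R :=
  if Rle_dec s 0 then 0 else Rmax_upto (glue_term a b s) N.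

Definition glue (p q : X + Y) (s : R) : R :=
  match p, q with
  | inl a, inl a' => Mx a a' s
  | inr b, inr b' => My b b' s
  | inl a, inr b | inr b, inl a => glue_cross a b s
  end.

Hypothesis Hx : is_nA_fuzzy_metric_prod X Mx.
Hypothesis Hy : is_nA_fuzzy_metric_prod Y My.
Variable c : R.
Hypothesis Hc : c < 1.
Hypothesis Hr_range : forall u, 0 < u -> 0 <= r u <= c.
Hypothesis Hr_mono : forall u1 u2, 0 < u1 -> u1 <= u2 -> r u1 <= r u2.
Hypothesis Hr_left_cont : forall u, 0 < u -> left_cont r u.
Hypothesis Hr_netX : forall u i j, 0 < u -> (i < N)%nat -> (j < N)%nat ->
  r u * r u * My (ys i) (ys j) u <= Mx (xs i) (xs j) u.
Hypothesis Hr_netY : forall u i j, 0 < u -> (i < N)%nat -> (j < N)%nat ->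
  r u * r u * Mx (xs i) (xs j) u <= My (ys i) (ys j) u.

Lemma glue_cross_pos a b s : 0 < s -> glue_cross a b s = Rmax_upto (glue_term a b s) N.
Proof. intros Hs. unfold glue_cross. destruct Rle_dec; [lra | reflexivity]. Qed.

Lemma glue_term_range a b s i : 0 < s -> 0 <= glue_term a b s i <= c.
Proof.
  intros Hs. unfold glue_term.
  pose proof (nAfm_range _ _ Hx a (xs i) s ltac:(lra)).
  pose proof (nAfm_range _ _ Hy (ys i) b s ltac:(lra)).
  pose proof (Hr_range s Hs).
  split; [repeat apply Rmult_le_pos; lra|].
  replace c with (1 * c * 1) by ring. apply Rmult3_le_compat; lra.
Qed.

Lemma glue_cross_nonneg a b s : 0 <= glue_cross a b s.
Proof. unfold glue_cross. destruct Rle_dec; [lra | apply Rmax_upto_nonneg]. Qed.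

Lemma glue_cross_le a b s : 0 < s -> glue_cross a b s <= c.
Proof.
  intros Hs. rewrite glue_cross_pos by exact Hs.
  apply Rmax_upto_le; [pose proof (Hr_range s Hs); lra|].
  intros i _. apply glue_term_range, Hs.
Qed.

Lemma glue_cross_ge a b s i : 0 < s -> (i < N)%nat -> glue_term a b s i <= glue_cross a b s.
Proof. intros Hs Hi. rewrite glue_cross_pos by exact Hs. apply Rmax_upto_ge, Hi. Qed.

Lemma glue_cross_attained a b s : 0 < s ->
  glue_cross a b s = 0 \/ exists i, (i < N)%nat /\ glue_cross a b s = glue_term a b s i.
Proof. intros Hs. rewrite glue_cross_pos by exact Hs. apply Rmax_upto_attained. Qed.

Lemma glue_cross_left_cont a b t : 0 < t -> left_cont (glue_cross a b) t.
Proof.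
  intros Ht. apply (left_cont_ext (fun s => Rmax_upto (fun i => glue_term a b s i) N));
    [exact Ht | intros; apply glue_cross_pos; auto|].
  apply (left_cont_Rmax_upto (fun i s => glue_term a b s i)). intros i _.
  unfold glue_term. apply left_cont_mult; [exact Ht | | | |].
  - intros s Hs. apply Rabs_le_1.
    pose proof (nAfm_range _ _ Hx a (xs i) s ltac:(lra)). pose proof (Hr_range s Hs).
    split; [apply Rmult_le_pos|]; nra.
  - intros s Hs. apply Rabs_le_1, nAfm_range; auto; lra.
  - apply left_cont_mult; auto using nAfm_left_cont.
    + intros s Hs. apply Rabs_le_1, nAfm_range; auto; lra.
    + intros s Hs. apply Rabs_le_1. pose proof (Hr_range s Hs). lra.
  - apply nAfm_left_cont; auto.
Qed.

Section Composition.

Variables (t s u : R).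
Hypotheses (Ht : 0 < t) (Hs : 0 < s) (Htu : t <= u) (Hsu : s <= u).

Lemma glue_cross_compose_l a a' b : Mx a a' t * glue_cross a' b s <= glue_cross a b u.
Proof.
  pose proof (nAfm_range _ _ Hx a a' t ltac:(lra)).
  destruct (glue_cross_attained a' b s Hs) as [E|[i [Hi E]]]; rewrite E.
  { rewrite Rmult_0_r. apply glue_cross_nonneg. }
  eapply Rle_trans; [|apply (glue_cross_ge _ _ _ i); auto; lra]. unfold glue_term.
  rewrite <- !Rmult_assoc.
  pose proof (nAfm_range _ _ Hx a' (xs i) s ltac:(lra)).
  pose proof (nAfm_range _ _ Hy (ys i) b s ltac:(lra)). pose proof (Hr_range s Hs).
  apply Rmult3_le_compat; [apply Rmult_le_pos; lra | lra | lra | | |].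
  - apply nAfm_ultra; auto.
  - apply Hr_mono; auto.
  - apply nAfm_mono; auto.
Qed.

Lemma glue_cross_compose_r a b b' : glue_cross a b t * My b b' s <= glue_cross a b' u.
Proof.
  pose proof (nAfm_range _ _ Hy b b' s ltac:(lra)).
  destruct (glue_cross_attained a b t Ht) as [E|[i [Hi E]]]; rewrite E.
  { rewrite Rmult_0_l. apply glue_cross_nonneg. }
  eapply Rle_trans; [|apply (glue_cross_ge _ _ _ i); auto; lra]. unfold glue_term.
  rewrite Rmult_assoc.
  pose proof (nAfm_range _ _ Hx a (xs i) t ltac:(lra)).
  pose proof (nAfm_range _ _ Hy (ys i) b t ltac:(lra)). pose proof (Hr_range t Ht).
  apply Rmult3_le_compat; [lra | lra | apply Rmult_le_pos; lra | | |].
  - apply nAfm_mono; auto.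
  - apply Hr_mono; auto.
  - apply nAfm_ultra; auto.
Qed.

Lemma glue_cross_cross_l a a' b : glue_cross a b t * glue_cross a' b s <= Mx a a' u.
Proof.
  assert (Hu : 0 < u) by lra.
  pose proof (nAfm_range _ _ Hx a a' u ltac:(lra)).
  destruct (glue_cross_attained a b t Ht) as [E|[i [Hi E]]]; rewrite E;
    [rewrite Rmult_0_l; lra|].
  destruct (glue_cross_attained a' b s Hs) as [E'|[j [Hj E']]]; rewrite E';
    [rewrite Rmult_0_r; lra|].
  unfold glue_term.
  rewrite (nAfm_sym _ _ Hx a' (xs j) s), (nAfm_sym _ _ Hy (ys j) b s) by lra.
  pose proof (nAfm_range _ _ Hx a (xs i) t ltac:(lra)).
  pose proof (nAfm_range _ _ Hx (xs j) a' s ltac:(lra)).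
  pose proof (nAfm_range _ _ Hx (xs i) (xs j) u ltac:(lra)).
  pose proof (nAfm_range _ _ Hy (ys i) b t ltac:(lra)).
  pose proof (nAfm_range _ _ Hy b (ys j) s ltac:(lra)).
  pose proof (Hr_range t Ht); pose proof (Hr_range s Hs).
  assert (Hnet : r t * r s * (My (ys i) b t * My b (ys j) s) <= Mx (xs i) (xs j) u).
  { eapply Rle_trans; [|apply (Hr_netX u i j); auto].
    apply Rmult_le_compat; [apply Rmult_le_pos; lra | apply Rmult_le_pos; lra | |].
    - apply Rmult_le_compat; try lra; apply Hr_mono; lra.
    - apply nAfm_ultra; auto. }
  apply Rle_trans with (Mx a (xs i) t * Mx (xs i) (xs j) u * Mx (xs j) a' s).
  - replace (Mx a (xs i) t * r t * My (ys i) b t * (Mx (xs j) a' s * r s * My b (ys j) s))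
      with (Mx a (xs i) t * (r t * r s * (My (ys i) b t * My b (ys j) s)) * Mx (xs j) a' s)
      by ring.
    apply Rmult_le_compat_r; [lra|]. apply Rmult_le_compat_l; lra.
  - apply Rle_trans with (Mx a (xs j) u * Mx (xs j) a' s).
    + apply Rmult_le_compat_r; [lra|]. apply (nAfm_ultra _ _ Hx); auto; lra.
    + apply (nAfm_ultra _ _ Hx); auto; lra.
Qed.

Lemma glue_cross_cross_r a b b' : glue_cross a b t * glue_cross a b' s <= My b b' u.
Proof.
  assert (Hu : 0 < u) by lra.
  pose proof (nAfm_range _ _ Hy b b' u ltac:(lra)).
  destruct (glue_cross_attained a b t Ht) as [E|[i [Hi E]]]; rewrite E;
    [rewrite Rmult_0_l; lra|].
  destruct (glue_cross_attained a b' s Hs) as [E'|[j [Hj E']]]; rewrite E';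
    [rewrite Rmult_0_r; lra|].
  unfold glue_term.
  rewrite (nAfm_sym _ _ Hx a (xs i) t), (nAfm_sym _ _ Hy (ys i) b t) by lra.
  pose proof (nAfm_range _ _ Hx (xs i) a t ltac:(lra)).
  pose proof (nAfm_range _ _ Hx a (xs j) s ltac:(lra)).
  pose proof (nAfm_range _ _ Hy b (ys i) t ltac:(lra)).
  pose proof (nAfm_range _ _ Hy (ys j) b' s ltac:(lra)).
  pose proof (nAfm_range _ _ Hy (ys i) (ys j) u ltac:(lra)).
  pose proof (Hr_range t Ht); pose proof (Hr_range s Hs).
  assert (Hnet : r t * r s * (Mx (xs i) a t * Mx a (xs j) s) <= My (ys i) (ys j) u).
  { eapply Rle_trans; [|apply (Hr_netY u i j); auto].
    apply Rmult_le_compat; [apply Rmult_le_pos; lra | apply Rmult_le_pos; lra | |].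
    - apply Rmult_le_compat; try lra; apply Hr_mono; lra.
    - apply nAfm_ultra; auto. }
  apply Rle_trans with (My b (ys i) t * My (ys i) (ys j) u * My (ys j) b' s).
  - replace (Mx (xs i) a t * r t * My b (ys i) t * (Mx a (xs j) s * r s * My (ys j) b' s))
      with (My b (ys i) t * (r t * r s * (Mx (xs i) a t * Mx a (xs j) s)) * My (ys j) b' s)
      by ring.
    apply Rmult_le_compat_r; [lra|]. apply Rmult_le_compat_l; lra.
  - apply Rle_trans with (My b (ys j) u * My (ys j) b' s).
    + apply Rmult_le_compat_r; [lra|]. apply (nAfm_ultra _ _ Hy); auto; lra.
    + apply (nAfm_ultra _ _ Hy); auto; lra.
Qed.

End Composition.

Lemma glue_ultra p q w t s :
  0 < t -> 0 < s -> glue p q t * glue q w s <= glue p w (Rmax t s).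
Proof.
  intros Ht Hs. pose proof (Rmax_l t s); pose proof (Rmax_r t s).
  destruct p as [a|b], q as [a'|b'], w as [a''|b'']; simpl.
  - apply (nAfm_ultra _ _ Hx); auto.
  - apply glue_cross_compose_l; auto.
  - apply glue_cross_cross_l; auto.
  - apply glue_cross_compose_r; auto.
  - rewrite Rmult_comm, (nAfm_sym _ _ Hx) by lra.
    apply glue_cross_compose_l; auto.
  - apply glue_cross_cross_r; auto.
  - rewrite Rmult_comm, (nAfm_sym _ _ Hy) by lra.
    apply glue_cross_compose_r; auto.
  - apply (nAfm_ultra _ _ Hy); auto.
Qed.

Lemma glue_admissible : admissible Mx My glue.
Proof.
  split; [|split; reflexivity].
  apply is_nA_fuzzy_metric_prod_intro.
  - intros [a|b] [a'|b'] t Ht; simpl; auto using nAfm_range.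
    + split; [apply glue_cross_nonneg|].
      destruct (Req_dec t 0) as [->|Ht0].
      * unfold glue_cross. destruct Rle_dec; lra.
      * pose proof (glue_cross_le a b' t ltac:(lra)). lra.
    + split; [apply glue_cross_nonneg|].
      destruct (Req_dec t 0) as [->|Ht0].
      * unfold glue_cross. destruct Rle_dec; lra.
      * pose proof (glue_cross_le a' b t ltac:(lra)). lra.
  - intros [a|b] [a'|b']; simpl; auto using nAfm_zero;
      unfold glue_cross; destruct Rle_dec; lra.
  - intros [a|b] [a'|b']; simpl; split; try discriminate.
    + intros H. f_equal. apply (nAfm_eq _ _ Hx). exact H.
    + intros [= <-] t Ht. apply (nAfm_self _ _ Hx), Ht.
    + intros H. pose proof (glue_cross_le a b' 1 ltac:(lra)). rewrite H in *; lra.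
    + intros H. pose proof (glue_cross_le a' b 1 ltac:(lra)). rewrite H in *; lra.
    + intros H. f_equal. apply (nAfm_eq _ _ Hy). exact H.
    + intros [= <-] t Ht. apply (nAfm_self _ _ Hy), Ht.
  - intros [a|b] [a'|b'] t Ht; simpl; auto using nAfm_sym.
  - intros [a|b] [a'|b'] t Ht; cbv beta iota delta [glue];
      auto using nAfm_left_cont, glue_cross_left_cont.
  - intros p q w t s Ht Hs. apply glue_ultra; auto.
Qed.

Lemma H_M_glue_ge (t L : R) : 0 < t -> inhabited X -> inhabited Y ->
  (forall a, exists i, (i < N)%nat /\ L < Mx a (xs i) t) ->
  (forall b, exists i, (i < N)%nat /\ L < My b (ys i) t) ->
  exists h, H_M glue t = Finite h /\ L * r t <= h.
Proof.
  intros Ht HX HY HnetX HnetY.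
  pose proof (Hr_range t Ht).
  assert (Hle1 : forall a b, glue_cross a b t <= 1)
    by (intros a b; pose proof (glue_cross_le a b t Ht); lra).
  destruct (inf_img_finite_ge (fun a => real (sup_img (fun b => glue (inl a) (inr b) t)))
    (L * r t) HX) as [h1 [E1 H1]].
  { intros a. destruct (HnetX a) as [i [Hi HL]].
    eapply Rle_trans; [|apply (sup_img_ge_real _ 1 (Hle1 a) (ys i))].
    eapply Rle_trans; [|apply glue_cross_ge; eauto]. unfold glue_term.
    rewrite (nAfm_self _ _ Hy _ _ Ht), Rmult_1_r. apply Rmult_le_compat_r; lra. }
  destruct (inf_img_finite_ge (fun b => real (sup_img (fun a => glue (inl a) (inr b) t)))
    (L * r t) HY) as [h2 [E2 H2]].
  { intros b. destruct (HnetY b) as [i [Hi HL]].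
    eapply Rle_trans; [|apply (sup_img_ge_real _ 1 (fun a => Hle1 a b) (xs i))].
    eapply Rle_trans; [|apply glue_cross_ge; eauto]. unfold glue_term.
    rewrite (nAfm_self _ _ Hx _ _ Ht), Rmult_1_l, (nAfm_sym _ _ Hy (ys i)) by lra.
    rewrite (Rmult_comm L). apply Rmult_le_compat_l; lra. }
  unfold H_M. rewrite E1, E2. exists (Rmin h1 h2). split; [reflexivity|].
  apply Rmin_glb; auto.
Qed.

End Glue.

Lemma left_cont_scaled_lt_persists (a b : R -> R) (k t : R) :
  0 < t -> 0 <= k <= 1 -> left_cont a t -> left_cont b t -> k * b t < a t ->
  exists d, 0 < d /\ forall u, t - d < u -> u <= t -> k * b u < a u.
Proof.
  intros Ht Hk Ha Hb Hlt.
  set (e := (a t - k * b t) / 2).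
  destruct (Ha e) as [d1 [Hd1 H1]]; [unfold e; lra|].
  destruct (Hb e) as [d2 [Hd2 H2]]; [unfold e; lra|].
  exists (Rmin (Rmin d1 d2) t). split; [repeat apply Rmin_pos; auto|].
  intros u Hl Hr.
  pose proof (Rmin_l d1 d2); pose proof (Rmin_r d1 d2).
  pose proof (Rmin_l (Rmin d1 d2) t); pose proof (Rmin_r (Rmin d1 d2) t).
  specialize (H1 u ltac:(lra) ltac:(lra) Hr). specialize (H2 u ltac:(lra) ltac:(lra) Hr).
  apply Rabs_def2 in H1, H2. unfold e in *. nra.
Qed.

Lemma uniform_left_delta {A : Type} (l : list A) (Q : A -> R -> Prop) (t : R) :
  (forall p, In p l -> exists d, 0 < d /\ forall u, t - d < u -> u <= t -> Q p u) ->
  exists d, 0 < d /\ forall p, In p l -> forall u, t - d < u -> u <= t -> Q p u.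
Proof.
  induction l as [|p l IH]; intros H.
  - exists 1. split; [lra | intros p []].
  - destruct IH as [d1 [Hd1 H1]]; [intros; apply H; right; auto|].
    destruct (H p) as [d2 [Hd2 H2]]; [left; auto|].
    exists (Rmin d1 d2). split; [apply Rmin_pos; auto|].
    pose proof (Rmin_l d1 d2); pose proof (Rmin_r d1 d2).
    intros q [<-|Hq] u Hl Hr; [apply H2 | apply H1]; auto; lra.
Qed.

Definition cutoff (c : R) (C : R -> R) (u0 u : R) : R :=
  if Rle_dec u u0 then c * C u else c.

Section Cutoff.

Variables (c u0 : R) (C : R -> R).
Hypothesis Hc : 0 < c < 1.
Hypothesis HC_range : forall s, 0 < s -> 0 < C s <= 1.
Hypothesis HC_mono : forall s1 s2, 0 < s1 -> s1 <= s2 -> C s1 <= C s2.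
Hypothesis HC_left_cont : forall s, 0 < s -> forall e, 0 < e -> exists d, 0 < d /\
  forall u, 0 < u -> s - d < u -> u <= s -> Rabs (C u - C s) < e.

Lemma cutoff_range u : 0 < u -> 0 <= cutoff c C u0 u <= c.
Proof.
  intros Hu. unfold cutoff. destruct Rle_dec; [pose proof (HC_range u Hu); split|]; nra.
Qed.

Lemma cutoff_mono u1 u2 : 0 < u1 -> u1 <= u2 -> cutoff c C u0 u1 <= cutoff c C u0 u2.
Proof.
  intros H1 H12. unfold cutoff.
  pose proof (HC_range u1 H1). pose proof (HC_mono u1 u2 H1 H12).
  destruct (Rle_dec u1 u0), (Rle_dec u2 u0); nra.
Qed.

Lemma cutoff_left_cont u : 0 < u -> left_cont (cutoff c C u0) u.
Proof.
  intros Hu e He. unfold cutoff. destruct (Rle_dec u u0).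
  - destruct (HC_left_cont u Hu e He) as [d [Hd H]].
    exists (Rmin d u). split; [apply Rmin_pos; auto|].
    pose proof (Rmin_l d u); pose proof (Rmin_r d u).
    intros s Hs Hl Hr. destruct (Rle_dec s u0); [|lra].
    replace (c * C s - c * C u) with (c * (C s - C u)) by ring.
    rewrite Rabs_mult, Rabs_pos_eq by lra.
    specialize (H s ltac:(lra) ltac:(lra) Hr). pose proof (Rabs_pos (C s - C u)). nra.
  - exists (u - u0). split; [lra|]. intros s Hs Hl Hr.
    destruct (Rle_dec s u0); [lra|]. rewrite Rminus_diag, Rabs_R0. exact He.
Qed.

(* Three regimes: below [u0] the diameter bound [C], on [(u0, t]] closeness at
   [t] propagated by left continuity, above [t] the ratio condition. *)
Lemma cutoff_sq_scaled_le (a b : R -> R) (t : R) : 0 < t ->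
  (forall u, 0 < u -> C u <= a u <= 1) -> (forall u, 0 < u -> C u <= b u <= 1) ->
  (forall u, u0 < u -> u <= t -> c * c * b u <= a u) ->
  c * c * b t < a t ->
  (forall u, t < u -> a u < b u -> a u / b u >= a t / b t) ->
  forall u, 0 < u -> cutoff c C u0 u * cutoff c C u0 u * b u <= a u.
Proof.
  intros Ht Ha Hb Hmid Hat Hratio u Hu.
  pose proof (Ha u Hu); pose proof (Hb u Hu); pose proof (HC_range u Hu).
  unfold cutoff. destruct (Rle_dec u u0) as [Hle|Hgt].
  - assert (c * C u * (c * C u) <= C u * C u) by (apply Rmult_le_compat; nra).
    assert (C u * C u <= C u) by nra.
    assert (c * C u * (c * C u) * b u <= c * C u * (c * C u)) by nra.
    lra.
  - destruct (Rle_dec u t); [apply Hmid; lra|].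
    destruct (Rlt_dec (a u) (b u)) as [Hlt|Hge].
    2:{ apply Rnot_lt_le in Hge. assert (c * c <= 1) by nra. nra. }
    pose proof (Hratio u ltac:(lra) Hlt) as Hq.
    pose proof (Ha t Ht); pose proof (Hb t Ht); pose proof (HC_range t Ht).
    assert (c * c < a t / b t).
    { apply Rmult_lt_reg_r with (b t); [lra|].
      replace (a t / b t * b t) with (a t) by (field; lra). lra. }
    assert (Hlt' : c * c * b u < a u / b u * b u) by (apply Rmult_lt_compat_r; lra).
    replace (a u / b u * b u) with (a u) in Hlt' by (field; lra). lra.
Qed.

End Cutoff.

Lemma nets_scaled_lt_near_left (A B : Type) (MA : A -> A -> R -> R) (MB : B -> B -> R -> R)
  (as_ : nat -> A) (bs : nat -> B) (N : nat) (k t : R) :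
  0 < t -> 0 <= k <= 1 ->
  is_nA_fuzzy_metric_prod A MA -> is_nA_fuzzy_metric_prod B MB ->
  (forall i j, (i < N)%nat -> (j < N)%nat -> k * MB (bs i) (bs j) t < MA (as_ i) (as_ j) t) ->
  exists d, 0 < d /\ forall i j, (i < N)%nat -> (j < N)%nat ->
    forall u, t - d < u -> u <= t -> k * MB (bs i) (bs j) u < MA (as_ i) (as_ j) u.
Proof.
  intros Ht Hk HA HB Hclose.
  destruct (uniform_left_delta (list_prod (seq 0 N) (seq 0 N))
    (fun p u => k * MB (bs (fst p)) (bs (snd p)) u < MA (as_ (fst p)) (as_ (snd p)) u) t)
    as [d [Hd H]].
  - intros [i j] Hij. apply in_prod_iff in Hij as [Hi Hj]. apply in_seq in Hi, Hj.
    apply left_cont_scaled_lt_persists; auto using nAfm_left_cont.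
    simpl. apply Hclose; lia.
  - exists d. split; [exact Hd|]. intros i j Hi Hj.
    apply (H (i, j)). apply in_prod; apply in_seq; lia.
Qed.

Section CloseNets.

Context {X Y : Type}.
Variables (Mx : X -> X -> R -> R) (My : Y -> Y -> R -> R).
Hypotheses (Hx : is_nA_fuzzy_metric_prod X Mx) (Hy : is_nA_fuzzy_metric_prod Y My).
Hypotheses (HX : inhabited X) (HY : inhabited Y).
Variable C : R -> R.
Hypothesis HC_range : forall s, 0 < s -> 0 < C s <= 1.
Hypothesis HC_mono : forall s1 s2, 0 < s1 -> s1 <= s2 -> C s1 <= C s2.
Hypothesis HC_left_cont : forall s, 0 < s -> forall e, 0 < e -> exists d, 0 < d /\
  forall u, 0 < u -> s - d < u -> u <= s -> Rabs (C u - C s) < e.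
Hypothesis HCx : forall s x x', 0 < s -> C s <= Mx x x' s.
Hypothesis HCy : forall s y y', 0 < s -> C s <= My y y' s.
Variables (t eps : R) (N : nat) (xs : nat -> X) (ys : nat -> Y).
Hypotheses (Ht : 0 < t) (Heps : 0 < eps < 1).
Hypotheses (HnetX : is_net Mx t eps N xs) (HnetY : is_net My t eps N ys).
Hypothesis Hratio_xy : forall s i j, t < s -> (i < N)%nat -> (j < N)%nat ->
  Mx (xs i) (xs j) s < My (ys i) (ys j) s ->
  Mx (xs i) (xs j) s / My (ys i) (ys j) s >= Mx (xs i) (xs j) t / My (ys i) (ys j) t.
Hypothesis Hratio_yx : forall s i j, t < s -> (i < N)%nat -> (j < N)%nat ->
  My (ys i) (ys j) s < Mx (xs i) (xs j) s ->
  My (ys i) (ys j) s / Mx (xs i) (xs j) s >= My (ys i) (ys j) t / Mx (xs i) (xs j) t.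
Hypothesis Hclose_xy : forall i j, (i < N)%nat -> (j < N)%nat ->
  (1 - eps / 2) * (1 - eps / 2) * My (ys i) (ys j) t < Mx (xs i) (xs j) t.
Hypothesis Hclose_yx : forall i j, (i < N)%nat -> (j < N)%nat ->
  (1 - eps / 2) * (1 - eps / 2) * Mx (xs i) (xs j) t < My (ys i) (ys j) t.

Lemma M_GH_gt_of_close_nets t' : t <= t' -> Rbar_lt ((1 - eps) ^ 2) (M_GH Mx My t').
Proof.
  intros Htt.
  set (c := 1 - eps / 2) in *.
  assert (Hc : 0 < c < 1) by (unfold c; lra).
  assert (Hcc : 0 <= c * c <= 1) by (split; nra).
  destruct (nets_scaled_lt_near_left _ _ _ _ _ _ N _ t Ht Hcc Hx Hy Hclose_xy)
    as [d1 [Hd1 H1]].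
  destruct (nets_scaled_lt_near_left _ _ _ _ _ _ N _ t Ht Hcc Hy Hx Hclose_yx)
    as [d2 [Hd2 H2]].
  set (u0 := Rmax (Rmax (t - d1) (t - d2)) (t / 2)).
  assert (Hu0 : t - d1 <= u0 /\ t - d2 <= u0 /\ t / 2 <= u0 /\ u0 < t).
  { unfold u0. pose proof (Rmax_l (t - d1) (t - d2)); pose proof (Rmax_r (t - d1) (t - d2)).
    pose proof (Rmax_l (Rmax (t - d1) (t - d2)) (t / 2)).
    pose proof (Rmax_r (Rmax (t - d1) (t - d2)) (t / 2)).
    repeat split; try lra. repeat apply Rmax_lub_lt; lra. }
  set (r := cutoff c C u0).
  assert (Had : admissible Mx My (glue Mx My N xs ys r)).
  { apply (glue_admissible _ _ _ _ _ _ Hx Hy c); try lra.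
    - apply cutoff_range; auto.
    - apply cutoff_mono; auto.
    - apply cutoff_left_cont; auto.
    - intros u i j Hu Hi Hj.
      apply (cutoff_sq_scaled_le c u0 C Hc HC_range _ _ t); auto.
      + intros v Hv. split; [apply HCx; auto | apply (nAfm_range _ _ Hx); lra].
      + intros v Hv. split; [apply HCy; auto | apply (nAfm_range _ _ Hy); lra].
      + intros v Hv Hvt. apply Rlt_le, H1; auto; lra.
    - intros u i j Hu Hi Hj.
      apply (cutoff_sq_scaled_le c u0 C Hc HC_range _ _ t); auto.
      + intros v Hv. split; [apply HCy; auto | apply (nAfm_range _ _ Hy); lra].
      + intros v Hv. split; [apply HCx; auto | apply (nAfm_range _ _ Hx); lra].
      + intros v Hv Hvt. apply Rlt_le, H2; auto; lra. }
  destruct (H_M_glue_ge Mx My N xs ys r Hx Hy c ltac:(lra) (cutoff_range c u0 C Hc HC_range)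
    t' (1 - eps) ltac:(lra) HX HY) as [h [Eh Hh]].
  - intros a. destruct (HnetX a) as [i [Hi Ha]]. exists i. split; [exact Hi|].
    eapply Rlt_le_trans; [exact Ha | apply (nAfm_mono _ _ Hx); auto].
  - intros b. destruct (HnetY b) as [i [Hi Hb]]. exists i. split; [exact Hi|].
    eapply Rlt_le_trans; [exact Hb | apply (nAfm_mono _ _ Hy); auto].
  - eapply Rbar_lt_le_trans; [|apply (M_GH_ge_H_M _ _ _ _ _ Had Eh)].
    unfold r, cutoff in Hh. destruct Rle_dec; [lra|]. simpl. unfold c in *. nra.
Qed.

End CloseNets.

Lemma le_M_of_le_diam_s {X : Type} (M : X -> X -> R -> R) (s c : R) :
  Rbar_le c (diam_s M s) -> forall x y, c <= M x y s.
Proof.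
  intros H x y.
  exact (Rbar_le_trans c _ (M x y s) H (inf_img_le (fun p : X * X => M (fst p) (snd p) s) (x, y))).
Qed.

Definition vanishing_radius (K : nat) : R := / (INR K + 2).

Lemma vanishing_radius_range K : 0 < vanishing_radius K < 1.
Proof.
  unfold vanishing_radius. pose proof (pos_INR K).
  split; [apply Rinv_0_lt_compat; lra|].
  rewrite <- Rinv_1. apply Rinv_lt_contravar; lra.
Qed.

Lemma vanishing_radius_small x : 0 < x -> exists K, vanishing_radius K <= x.
Proof.
  intros Hx. destruct (archimed_cor1 x Hx) as [K [HK HK0]].
  exists K. unfold vanishing_radius. apply Rlt_le, Rle_lt_trans with (/ INR K); [|exact HK].
  apply Rinv_le_contravar; [apply lt_0_INR; exact HK0 | lra].
Qed.

Section Sequence.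

Variables (X : nat -> Type) (M : forall n, X n -> X n -> R -> R).
Hypothesis Hfm : forall n, is_nA_fuzzy_metric_prod (X n) (M n).
Hypothesis Hne : forall n, inhabited (X n).
Variable C : R -> R.
Hypothesis HCmono : forall s1 s2, 0 < s1 -> s1 <= s2 -> C s1 <= C s2.
Hypothesis HClc : forall s, 0 < s -> forall e, 0 < e -> exists d, 0 < d /\
  forall u, 0 < u -> s - d < u -> u <= s -> Rabs (C u - C s) < e.
Hypothesis HCrange : forall s, 0 < s -> 0 < C s <= 1.
Hypothesis HCdiam : forall s n, 0 < s -> Rbar_le (Finite (C s)) (diam_s (M n) s).
Variable Nf : R -> R -> nat.
Hypothesis Hnets : forall t eps, 0 < t -> 0 < eps < 1 ->
  exists xs : forall n, nat -> X n,
    (forall n, is_net (M n) t eps (Nf eps t) (xs n)) /\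
    (forall n m s i j, t < s -> (i < Nf eps t)%nat -> (j < Nf eps t)%nat ->
       M n (xs n i) (xs n j) s < M m (xs m i) (xs m j) s ->
       M n (xs n i) (xs n j) s / M m (xs m i) (xs m j) s >=
       M n (xs n i) (xs n j) t / M m (xs m i) (xs m j) t).

(* Along a subsequence on which the finitely many net distances at time [t]
   all vary by less than [C t * (1 - c^2)], any two nets are [c^2]-close. *)
Lemma M_GH_close_subsequence (psi : nat -> nat) (t eps : R) :
  strictly_increasing psi -> 0 < t -> 0 < eps < 1 ->
  exists th, strictly_increasing th /\ forall j k t', t <= t' ->
    Rbar_lt ((1 - eps) ^ 2) (M_GH (M (psi (th j))) (M (psi (th k))) t').
Proof.
  intros Hpsi Ht Heps.
  destruct (Hnets t eps Ht Heps) as [xs [Hnet Hratio]].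
  set (N := Nf eps t) in *.
  set (c := 1 - eps / 2).
  assert (HCt := HCrange t Ht).
  assert (HCle : forall s n x y, 0 < s -> C s <= M n x y s)
    by (intros s n x y Hs; apply le_M_of_le_diam_s, HCdiam, Hs).
  assert (Hh : 0 < C t * (1 - c * c)) by (unfold c; apply Rmult_lt_0_compat; nra).
  destruct (unit_seqs_close_subsequence (nat * nat)
    (fun p n => M (psi n) (xs (psi n) (fst p)) (xs (psi n) (snd p)) t) _ Hh)
    with (L := list_prod (seq 0 N) (seq 0 N)) as [th [Hth Hclose]].
  { intros p n. apply nAfm_range; auto; lra. }
  exists th. split; [exact Hth|]. intros j k t' Htt.
  assert (Hc2 : forall n m i l, (i < N)%nat -> (l < N)%nat ->
    c * c * M (psi (th m)) (xs _ i) (xs _ l) t < M (psi (th n)) (xs _ i) (xs _ l) t).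
  { intros n m i l Hi Hl.
    assert (Hin : In (i, l) (list_prod (seq 0 N) (seq 0 N)))
      by (apply in_prod; apply in_seq; lia).
    specialize (Hclose _ Hin n m). simpl in Hclose. apply Rabs_def2 in Hclose.
    pose proof (HCle t (psi (th n)) (xs (psi (th n)) i) (xs (psi (th n)) l) Ht).
    pose proof (HCle t (psi (th m)) (xs (psi (th m)) i) (xs (psi (th m)) l) Ht).
    pose proof (nAfm_range _ _ (Hfm (psi (th m))) (xs (psi (th m)) i) (xs (psi (th m)) l) t).
    unfold c in *. nra. }
  apply (M_GH_gt_of_close_nets (M (psi (th j))) (M (psi (th k))) (Hfm _) (Hfm _)
    (Hne _) (Hne _) C HCrange HCmono HClc (fun s => HCle s _) (fun s => HCle s _) t eps N
    (xs (psi (th j))) (xs (psi (th k)))); auto.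
Qed.

Lemma M_GH_Cauchy_subsequence :
  exists phi, strictly_increasing phi /\ GH_Cauchy (fun k => X (phi k)) (fun k => M (phi k)).
Proof.
  destruct (diagonal_subsequence (fun K n m => forall t', vanishing_radius K <= t' ->
    Rbar_lt ((1 - vanishing_radius K) ^ 2) (M_GH (M n) (M m) t'))) as [phi [Hphi Hdiag]].
  { intros K psi Hpsi. destruct (vanishing_radius_range K).
    apply M_GH_close_subsequence; auto. }
  exists phi. split; [exact Hphi|].
  intros t eps Ht Heps.
  destruct (vanishing_radius_small (Rmin t (eps / 2))) as [K HK]; [apply Rmin_pos; lra|].
  pose proof (Rmin_l t (eps / 2)); pose proof (Rmin_r t (eps / 2)).
  pose proof (vanishing_radius_range K).
  exists (S K). intros n m Hn Hm.
  eapply Rbar_le_lt_trans; [|apply (Hdiag K n m); lia || lra].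
  simpl. nra.
Qed.

End Sequence.

Theorem mainTheorem8
  (X : nat -> Type) (M : forall n, X n -> X n -> R -> R)
  (Hfm : forall n, is_nA_fuzzy_metric_prod (X n) (M n))
  (Hne : forall n, inhabited (X n))
  (Hcpt : forall n, f_compact_space (X n) (M n))
  (* (1) *)
  (C : R -> R)
  (HCmono : forall s1 s2, 0 < s1 -> s1 <= s2 -> C s1 <= C s2)
  (HClc : forall s, 0 < s -> forall e, 0 < e -> exists d, 0 < d /\
            forall u, 0 < u -> s - d < u -> u <= s -> Rabs (C u - C s) < e)
  (HCrange : forall s, 0 < s -> 0 < C s <= 1)
  (HCdiam : forall s n, 0 < s -> Rbar_le (Finite (C s)) (diam_s (M n) s))
  (* (2) *)
  (Nf : R -> R -> nat)
  (HCov : forall t eps, 0 < t -> 0 < eps < 1 ->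
            forall n k, Cov_is (M n) eps t k -> (k <= Nf eps t)%nat)
  (* (3) *)
  (Hnets : forall t eps, 0 < t -> 0 < eps < 1 ->
     exists xs : forall n, nat -> X n,
       (forall n, is_net (M n) t eps (Nf eps t) (xs n)) /\
       (forall n m s i j, t < s -> (i < Nf eps t)%nat -> (j < Nf eps t)%nat ->
          M n (xs n i) (xs n j) s < M m (xs m i) (xs m j) s ->
          M n (xs n i) (xs n j) s / M m (xs m i) (xs m j) s >=
          M n (xs n i) (xs n j) t / M m (xs m i) (xs m j) t)) :
  (forall t eps, 0 < t -> 0 < eps < 1 ->
     exists phi : nat -> nat, strictly_increasing phi /\
       forall j k, Rbar_lt (Finite ((1 - eps) ^ 2)) (M_GH (M (phi j)) (M (phi k)) t)) /\
  (exists phi : nat -> nat, strictly_increasing phi /\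
     GH_Cauchy (fun k => X (phi k)) (fun k => M (phi k))).
Proof.
  split.
  - intros t eps Ht Heps.
    destruct (M_GH_close_subsequence X M Hfm Hne C HCmono HClc HCrange HCdiam Nf Hnets
      (fun k => k) t eps strictly_increasing_id Ht Heps) as [phi [Hphi Hclose]].
    exists phi. split; [exact Hphi|]. intros j k. apply Hclose, Rle_refl.
  - exact (M_GH_Cauchy_subsequence X M Hfm Hne C HCmono HClc HCrange HCdiam Nf Hnets).
Qed.
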